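(* Let $Q,M,B\in\mathbb{R}^{n\times n}$ be symmetric positive semidefinite, and let $\Pi\in\mathbb{R}^{n\times n}$ satisfy $Q-\Pi M^\dagger\Pi^\top\succeq0$ and $\Pi^\top=MM^\dagger\Pi^\top$. Then for all matrices $R,G\in\mathbb{R}^{n\times n}$, $$\operatorname{tr}\{QRR^\top+BMBGG^\top\}\ \ge\ 2\operatorname{tr}\{\Pi BGR^\top\}.$$
   Context: $M^\dagger$ denotes the Moore–Penrose pseudoinverse of $M$. *)

From mathcomp Require Import all_boot all_order all_algebra.
From mathcomp Require Import reals.
Set Implicit Arguments. Unset Strict Implicit. Unset Printing Implicit Defensive.
Import Order.TTheory GRing.Theory Num.Theory.
Local Open Scope ring_scope.

Definition psd (R : realType) (n : nat) (A : 'M[R]_n) : Prop :=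
  A^T = A /\ forall x : 'cV[R]_n, 0 <= (x^T *m A *m x) 0 0.

(* X is the Moore-Penrose pseudoinverse of M (the four Penrose conditions;
   such X exists and is unique). *)
Definition is_pinv (R : realType) (m n : nat) (M : 'M[R]_(m, n)) (X : 'M[R]_(n, m)) : Prop :=
  [/\ M *m X *m M = M, X *m M *m X = X,
      (M *m X)^T = M *m X & (X *m M)^T = X *m M].

From mathcomp Require Import all_boot all_order all_algebra.
From mathcomp Require Import reals.
From mathcomp Require Import ring lra.
Import Order.TTheory GRing.Theory Num.Theory.
Local Open Scope ring_scope.

(* With [Z := Pi^T R] and [Y := B G], the Schur-complement condition gives
   [tr (R^T Q R) >= tr (Z^T M^+ Z)], while expanding the nonnegative quantity
   [tr ((M^+ Z - Y)^T M (M^+ Z - Y))] with the range condition [M M^+ Z = Z]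
   gives [tr (Z^T M^+ Z) + tr (Y^T M Y) >= 2 tr (Z^T Y)]. *)

Section TraceQuadraticForms.

Context {R : numDomainType} {n : nat}.

Lemma col_mulmx {m p} (j : 'I_p) (A : 'M[R]_(m, n)) (X : 'M[R]_(n, p)) :
  col j (A *m X) = A *m col j X.
Proof. by rewrite !colE mulmxA. Qed.

Lemma mxtrace_quad_ge0 {p} (A : 'M[R]_n) (X : 'M[R]_(n, p)) :
  (forall x : 'cV[R]_n, 0 <= (x^T *m A *m x) 0 0) -> 0 <= \tr (X^T *m A *m X).
Proof.
move=> A_ge0; apply: sumr_ge0 => i _.
have -> : (X^T *m A *m X) i i = (col i (row i (X^T *m A *m X))) 0 0 by rewrite !mxE.
by rewrite row_mul col_mulmx row_mul -tr_col.
Qed.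

Lemma mxtrace_quad_le {p} {A C : 'M[R]_n} (X : 'M[R]_(n, p)) :
  (forall x : 'cV[R]_n, 0 <= (x^T *m (A - C) *m x) 0 0) ->
  \tr (X^T *m C *m X) <= \tr (X^T *m A *m X).
Proof.
move=> /(mxtrace_quad_ge0 _ X).
by rewrite mulmxBr mulmxBl linearB subr_ge0.
Qed.

Lemma mxtrace_cross_le {p} {M P : 'M[R]_n} {Z : 'M[R]_(n, p)} (Y : 'M[R]_(n, p)) :
  M^T = M -> (forall x : 'cV[R]_n, 0 <= (x^T *m M *m x) 0 0) ->
  M *m P *m Z = Z ->
  2%:R * \tr (Z^T *m Y) <= \tr (Z^T *m P *m Z) + \tr (Y^T *m M *m Y).
Proof.
move=> sym_M M_ge0 MPZ; have MPZ' : M *m (P *m Z) = Z by rewrite mulmxA.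
have eZZ : \tr ((P *m Z)^T *m M *m (P *m Z)) = \tr (Z^T *m P *m Z).
  by rewrite -mulmxA MPZ' -mxtrace_tr trmx_mul trmxK mulmxA.
have eYZ : \tr (Y^T *m M *m (P *m Z)) = \tr (Z^T *m Y).
  by rewrite -mulmxA MPZ' -mxtrace_tr trmx_mul trmxK.
have eZY : \tr ((P *m Z)^T *m M *m Y) = \tr (Z^T *m Y).
  by rewrite -eYZ -mxtrace_tr !trmx_mul !trmxK sym_M !mulmxA.
have square : \tr ((P *m Z - Y)^T *m M *m (P *m Z - Y))
    = \tr (Z^T *m P *m Z) + \tr (Y^T *m M *m Y) - 2%:R * \tr (Z^T *m Y).
  rewrite (raddfB (@trmx _ _ _)) /= !mulmxBl !mulmxBr !linearB /= eZZ eYZ eZY.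
  ring.
by rewrite -subr_ge0 -square mxtrace_quad_ge0.
Qed.

End TraceQuadraticForms.

Theorem lemma2 (R : realType) (n : nat) (Q M B Pi Mdag : 'M[R]_n)
  (hMdag : is_pinv M Mdag)
  (hQ : psd Q) (hM : psd M) (hB : psd B)
  (hPi : psd (Q - Pi *m Mdag *m Pi^T))
  (hrange : Pi^T = M *m Mdag *m Pi^T) :
  forall G Rm : 'M[R]_n,
    \tr (Q *m Rm *m Rm^T + B *m M *m B *m G *m G^T)
      >= 2%:R * \tr (Pi *m B *m G *m Rm^T).
Proof.
move=> G Rm; case: hM => sym_M M_ge0; case: hB => sym_B _; case: hPi => _ Schur_ge0.
set Z := Pi^T *m Rm; set Y := B *m G.
have schur : \tr (Z^T *m Mdag *m Z) <= \tr (Q *m Rm *m Rm^T).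
  have := mxtrace_quad_le Rm Schur_ge0.
  by rewrite [X in _ -> _ <= X]mxtrace_mulC /Z trmx_mul trmxK !mulmxA.
have range_Z : M *m Mdag *m Z = Z by rewrite /Z mulmxA -hrange.
have cross := mxtrace_cross_le Y sym_M M_ge0 range_Z.
have eY : \tr (B *m M *m B *m G *m G^T) = \tr (Y^T *m M *m Y).
  by rewrite mxtrace_mulC /Y trmx_mul sym_B !mulmxA.
have eZY : \tr (Pi *m B *m G *m Rm^T) = \tr (Z^T *m Y).
  by rewrite mxtrace_mulC /Z /Y trmx_mul trmxK !mulmxA.
rewrite mxtraceD eY eZY; lra.
Qed.
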